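(* Let $n\ge 1$, $L\ge 1$ and $0\le s<n$ be integers, and consider the $(n,L)$-regular tree $T$. Let $\mathcal{D}$ be a finite data set with $|\mathcal{D}|=d\ge 1$, and let $r\in[0,1]$. Suppose a data placement assigns to each worker node $v$ a set $\mathcal{D}(v)\subseteq\mathcal{D}$ with $|\mathcal{D}(v)|\le r d$ for every worker $v$, and suppose the placement is robust to any $s$ stragglers per parent (as defined in the context). Then $$ r \;\ge\; r_{\mathsf{CR}} \;:=\; \frac{1}{\left(\frac{n}{s+1}\right)+\left(\frac{n}{s+1}\right)^2+\cdots+\left(\frac{n}{s+1}\right)^L}. $$
   Context: An $(n,L)$-regular tree consists of a root node (the master, layer $0$) and $L$ layers of worker nodes: each node in layers $0,1,\dots,L-1$ has exactly $n$ children in the next layer, and the nodes of layer $L$ are leaves; thus there are $N=n+n^2+\cdots+n^L$ worker nodes. A straggling pattern is a choice, for every node $u$ in layers $0,\dots,L-1$, of a set of at most $s$ of the children of $u$, declared straggling. Under a straggling pattern, a worker node $v$ is called surviving if neither $v$ nor any of its ancestors in layers $1,\dots,L$ (i.e. the nodes on the path from $v$ to the master, excluding the master) is straggling. The placement $\{\mathcal{D}(v)\}$ is robust to any $s$ stragglers per parent if for every straggling pattern and every data point $x\in\mathcal{D}$ there is a surviving worker $v$ with $x\in\mathcal{D}(v)$ (this is the necessary condition for the master to recover the full gradient $\sum_{x\in\mathcal{D}}\nabla\ell(\theta;x)$, since the contribution of $x$ can only be computed at nodes storing $x$ and propagated to the master along the tree). The number $r$ bounding the fraction of the data set stored at each worker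 is the computation load. *)

From HB Require Import structures.
From mathcomp Require Import all_boot all_order all_algebra.
Set Implicit Arguments. Unset Strict Implicit. Unset Printing Implicit Defensive.
Import Order.TTheory GRing.Theory Num.Theory.

(* Nodes of the (n,L)-regular tree are encoded by their path from the master:
   a node in layer k is a sequence of length k of child indices in 'I_n.
   The master is [::]; worker nodes are the sequences of length 1..L. *)
Definition is_worker (n L : nat) (v : seq 'I_n) : bool := (1 <= size v <= L)%N.

(* A straggling pattern assigns to every node u (in layers 0..L-1) the set
   S u of its straggling children; it has at most s stragglers per parent. *)
Definition valid_pattern (n L s : nat) (S : seq 'I_n -> {set 'I_n}) : Prop :=
  forall u : seq 'I_n, (size u < L)%N -> (#|S u| <= s)%N.

(* v survives under S iff no node on the path from v to the master
   (excluding the master) is straggling: for every ancestor-or-self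
   rcons p c of v (p being its parent), c is not in S p. *)
Definition surviving (n : nat) (S : seq 'I_n -> {set 'I_n}) (v : seq 'I_n) : Prop :=
  forall (p : seq 'I_n) (c : 'I_n), prefix (rcons p c) v -> c \notin S p.

Definition robust (n L s : nat) (D : finType) (P : seq 'I_n -> {set D}) : Prop :=
  forall S : seq 'I_n -> {set 'I_n}, valid_pattern L s S ->
    forall x : D, exists v : seq 'I_n,
      [/\ is_worker L v, surviving S v & x \in P v].

From HB Require Import structures.
From mathcomp Require Import all_boot all_order all_algebra.
From mathcomp Require Import ring.
Set Implicit Arguments.
Unset Strict Implicit.
Unset Printing Implicit Defensive.
Import Order.TTheory GRing.Theory Num.Theory.
Local Open Scope ring_scope.

(* Give each worker storing x the weight (s+1)^-k, k being its depth, and sum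
   these weights over the tree. Robustness forces this sum to be at least 1
   for every x: otherwise an adversary that, at each node whose subtree has
   weight below 1, straggles the (at most s) children whose subtrees have
   weight at least 1 keeps every surviving path inside light subtrees, so no
   surviving worker stores x. Summing over x, each layer k contributes at most
   n^k (s+1)^-k r d, whence d <= r d \sum_k (n/(s+1))^k. *)

Section LowerBound.
Variable R : realFieldType.

Lemma card_ge1_le_sum (I : finType) (f : I -> R) :
  (forall i, 0 <= f i) -> #|[set i | 1 <= f i]|%:R <= \sum_i f i.
Proof.
move=> f_ge0; rewrite (bigID (fun i => 1 <= f i)) /= -[X in X <= _]addr0.
apply: lerD; last by apply: sumr_ge0.
rewrite -sum1_card natr_sum big_mkcond [X in _ <= X]big_mkcond /=.
by apply: ler_sum => i _; rewrite inE; case: ifP.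
Qed.

Definition geo (a : R) (m : nat) : R := \sum_(1 <= k < m.+1) a ^+ k.

Lemma geoS (a : R) m : geo a m.+1 = a * (1 + geo a m).
Proof.
rewrite /geo big_nat_recl // expr1 mulrDr mulr1 mulr_sumr; congr (_ + _).
by apply: eq_bigr => i _; rewrite exprS.
Qed.

Lemma geo_gt0 (a : R) m : 0 < a -> (0 < m)%N -> 0 < geo a m.
Proof.
move=> a_gt0; case: m => // m _; rewrite geoS mulr_gt0 // ltr_pwDl //.
by apply: sumr_ge0 => k _; rewrite exprn_ge0 ?ltW.
Qed.

Section Weight.
Variables (n L s : nat) (D : finType) (P : seq 'I_n -> {set D}).

Definition stores (x : D) (u : seq 'I_n) : bool := is_worker L u && (x \in P u).

Fixpoint weight (x : D) (m : nat) (u : seq 'I_n) : R :=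
  (stores x u)%:R +
  if m is m'.+1 then (s.+1)%:R^-1 * \sum_c weight x m' (rcons u c) else 0.

Lemma weight_ge0 x m u : 0 <= weight x m u.
Proof.
elim: m u => [|m IH] u /=; first by rewrite addr0.
by rewrite addr_ge0 // mulr_ge0 ?invr_ge0 // sumr_ge0.
Qed.

Lemma weight_stores x m u : stores x u -> 1 <= weight x m u.
Proof.
move=> xu; case: m => [|m] /=; rewrite xu lerDl //.
by rewrite mulr_ge0 ?invr_ge0 // sumr_ge0 // => c _; apply: weight_ge0.
Qed.

Definition heavy_children x m u := [set c | 1 <= weight x m (rcons u c)].

Lemma card_heavy_children x m u :
  weight x m.+1 u < 1 -> (#|heavy_children x m u| <= s)%N.
Proof.
move=> w_lt1; rewrite -ltnS -(ltr_nat R).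
have := card_ge1_le_sum (fun c => weight_ge0 x m (rcons u c)).
move/le_lt_trans; apply; rewrite -[X in _ < X]mulr1 -ltr_pdivrMl ?ltr0n //.
by apply: le_lt_trans w_lt1; rewrite /= lerDr.
Qed.

(* The adversary straggles the heavy children of [u] whenever there are at
   most [s] of them; a light node then only has light surviving children. *)
Definition adversary x (u : seq 'I_n) : {set 'I_n} :=
  let H := heavy_children x (L - (size u).+1) u in
  if (#|H| <= s)%N then H else set0.

Lemma adversary_valid x : valid_pattern L s (adversary x).
Proof. by move=> u _; rewrite /adversary; case: ifP => // _; rewrite cards0. Qed.

Lemma adversary_survivor_light x v :
  (0 < n)%N -> (size v <= L)%N -> weight x L [::] < 1 -> surviving (adversary x) v ->
  weight x (L - size v) v < 1.
Proof.
move=> n_gt0 vL root_light v_surv; rewrite -[v]take_size.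
elim: {-2}(size v) (leqnn (size v)) => [|k IHk] k_lt; first by rewrite take0 subn0.
rewrite (take_nth (Ordinal n_gt0) k_lt) size_rcons size_take k_lt.
set p := take k v; set c := nth _ v k.
have pL : (k < L)%N by apply: leq_trans k_lt vL.
have p_light := IHk (ltnW k_lt); rewrite size_take k_lt -(subnSK pL) in p_light.
have c_surv : c \notin adversary x p by apply: v_surv; rewrite -take_nth // prefix_take.
move: c_surv; rewrite /adversary size_take k_lt card_heavy_children //.
by rewrite inE ltNge.
Qed.

Lemma weight_root_ge1 x : (0 < n)%N -> robust L s P -> 1 <= weight x L [::].
Proof.
move=> n_gt0 P_robust; rewrite leNgt; apply/negP => root_light.
have [v [v_worker v_surv xv]] := P_robust _ (adversary_valid x) x.
have vL : (size v <= L)%N by case/andP: v_worker.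
have := adversary_survivor_light n_gt0 vL root_light v_surv.
by rewrite ltNge weight_stores // /stores v_worker.
Qed.

Section Load.
Variable r : R.
Hypothesis P_load : forall v, is_worker L v -> #|P v|%:R <= r * #|D|%:R.

Lemma sum_stores_le u : \sum_x (stores x u)%:R <= r * #|D|%:R * (is_worker L u)%:R.
Proof.
rewrite /stores; case: (boolP (is_worker L u)) => [u_worker|_] /=; last first.
  by rewrite big1 ?mulr0.
rewrite mulr1 (le_trans _ (P_load u_worker)) // -sum1_card natr_sum.
by rewrite [leRHS]big_mkcond; apply: ler_sum => x _; case: (x \in P u).
Qed.

Lemma sum_weight_le m u : (size u + m <= L)%N ->
  \sum_x weight x m u <=
  r * #|D|%:R * ((is_worker L u)%:R + geo (n%:R / s.+1%:R) m).
Proof.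
elim: m u => [|m IH] u um_L.
  rewrite /geo big_geq // addr0; under eq_bigr do rewrite /= addr0.
  exact: sum_stores_le.
rewrite big_split mulrDr lerD ?sum_stores_le //= -mulr_sumr exchange_big /= geoS.
have child_le c : \sum_x weight x m (rcons u c) <=
    r * #|D|%:R * (1 + geo (n%:R / s.+1%:R) m).
  have := IH (rcons u c); rewrite size_rcons addSnnS => /(_ um_L).
  suff -> : is_worker L (rcons u c) by [].
  by rewrite /is_worker size_rcons /= (leq_trans _ um_L) // addnS ltnS leq_addr.
apply: le_trans (ler_wpM2l _ (ler_sum _ (fun c _ => child_le c))) _.
  by rewrite invr_ge0.
rewrite sumr_const card_ord -[_ *+ n]mulr_natr le_eqVlt; apply/orP; left.
by apply/eqP; ring.
Qed.
End Load.
End Weight.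
End LowerBound.

Theorem theorem1 (R : realFieldType) (n L s : nat) (D : finType)
  (P : seq 'I_n -> {set D}) (r : R) :
  (1 <= n)%N -> (1 <= L)%N -> (s < n)%N -> (0 < #|D|)%N ->
  0 <= r -> r <= 1 ->
  (forall v : seq 'I_n, is_worker L v -> (#|P v|%:R <= r * #|D|%:R :> R)) ->
  robust L s P ->
  (\sum_(1 <= k < L.+1) ((n%:R / (s.+1)%:R : R) ^+ k))^-1 <= r.
Proof.
move=> n_gt0 L_gt0 _ D_gt0 _ _ P_load P_robust.
pose g := geo (n%:R / s.+1%:R : R) L; change (g^-1 <= r).
have g_gt0 : 0 < g by rewrite geo_gt0 // divr_gt0 ?ltr0n.
have D_le : #|D|%:R <= r * #|D|%:R * g.
  have := sum_weight_le s P_load (u := [::]) (leqnn L).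
  rewrite /= add0r; apply: le_trans.
  rewrite -sum1_card natr_sum; apply: ler_sum => x _.
  exact: weight_root_ge1.
have rg_ge1 : 1 <= r * g.
  by rewrite -(@ler_pM2r _ #|D|%:R) ?ltr0n // mul1r mulrAC.
by rewrite -[g^-1]mul1r ler_pdivrMr.
Qed.
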